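(* Let $A\in\mathbb{R}^{d\times d}$ be such that $\mathbf{I}_d-A$ is invertible, set $B:=(\mathbf{I}_d-A)^{-1}$, let $\mu_0,\mu_1\in\mathbb{R}^d$, $\sigma_0,\sigma_1>0$, and $D\in\mathbb{R}^{d\times d}$ a diagonal matrix with positive diagonal entries. Consider the structural causal model $\mathbf{X}_s=\mu_s+A\mathbf{X}_s+\epsilon_s$ with $\epsilon_s\sim\mathcal{N}(0,\sigma_s^2D)$, $s\in\{0,1\}$, so that $\mathbf{X}_s\sim\mathcal{N}(B\mu_s,\sigma_s^2BDB^\top)$. For a realization $\mathbf{x}_s$ of $\mathbf{X}_s$, let $\tilde{\mathbf{x}}^{\mathrm{OT}}_s$ be its image under the optimal transport map (for squared Euclidean cost) from the distribution of $\mathbf{X}_s$ to that of $\mathbf{X}_{s'}$, $s'=1-s$; this map has the form $\mathbf{x}\mapsto B\mu_{s'}+\mathbf{W}_s(\mathbf{x}-B\mu_s)$ for a matrix $\mathbf{W}_s\in\mathbb{R}^{d\times d}$. Then $\mathbf{W}_s=\sigma_{s'}\sigma_s^{-1}\mathbf{I}_d$, and consequently $\tilde{\mathbf{x}}^{\mathrm{OT}}_s=\tilde{\mathbf{x}}^{\mathrm{CF}}_s$.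
   Context: The counterfactual of $\mathbf{x}_s$ is obtained by recovering the noise $\epsilon_s=B^{-1}\mathbf{x}_s-\mu_s$, rescaling it to the other group ($\sigma_{s'}^{-1}(B^{-1}\tilde{\mathbf{x}}-\mu_{s'})=\sigma_s^{-1}(B^{-1}\mathbf{x}_s-\mu_s)$), which gives $\tilde{\mathbf{x}}^{\mathrm{CF}}_s=B\mu_{s'}+\sigma_{s'}\sigma_s^{-1}(\mathbf{x}_s-B\mu_s)$. The optimal transport map from $\mathcal{Q}_1$ to $\mathcal{Q}_2$ is the map $\mathbf{T}$ with $\mathbf{T}_{\#}\mathcal{Q}_1=\mathcal{Q}_2$ minimizing $\mathbb{E}_{\mathbf{X}\sim\mathcal{Q}_1}\|\mathbf{X}-\mathbf{T}(\mathbf{X})\|^2$. *)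

From HB Require Import structures.
From mathcomp Require Import all_boot all_order all_algebra.
From mathcomp Require Import all_classical all_reals all_analysis.
From mathcomp Require Import normal_distribution.

Set Implicit Arguments.
Unset Strict Implicit.
Unset Printing Implicit Defensive.

Import Order.TTheory GRing.Theory Num.Theory.
Local Open Scope classical_set_scope.
Local Open Scope ring_scope.

Section gaussian_ot.
Context {R : realType} {n : nat}.
Context {d : measure_display} {Omega : measurableType d}.
Variable P : probability Omega R.

Definition lin (u x : 'cV[R]_n) : R := \sum_(i < n) u i 0 * x i 0.

Definition quad (S : 'M[R]_n) (u : 'cV[R]_n) : R :=
  \sum_(i < n) \sum_(j < n) u i 0 * S i j * u j 0.

Definition sqdist (x y : 'cV[R]_n) : R := \sum_(i < n) (x i 0 - y i 0) ^+ 2.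

Definition rvec (X : Omega -> 'cV[R]_n) : Prop :=
  forall i : 'I_n, measurable_fun setT (fun w => X w i 0).

(* X ~ N(m, S) (multivariate normal, Cramer-Wold definition): every
   linear functional u^T X is N(u^T m, u^T S u), where a variance-0
   normal is the point mass at the mean. *)
Definition gaussian_vec (X : Omega -> 'cV[R]_n) (m : 'cV[R]_n) (S : 'M[R]_n)
  : Prop :=
  rvec X /\
  forall u : 'cV[R]_n,
    (0 < quad S u ->
       forall A : set R, measurable A ->
         P ((fun w => lin u (X w)) @^-1` A) =
         normal_prob (lin u m) (Num.sqrt (quad S u)) A) /\
    (quad S u = 0 -> P [set w | lin u (X w) = lin u m] = 1%E).

(* equality of the laws of two random vectors on R^n
   (through all one-dimensional projections, Cramer-Wold) *)
Definition same_law (Y Z : Omega -> 'cV[R]_n) : Prop :=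
  rvec Y /\ rvec Z /\
  forall (u : 'cV[R]_n) (A : set R), measurable A ->
    P ((fun w => lin u (Y w)) @^-1` A) = P ((fun w => lin u (Z w)) @^-1` A).

Definition transport_cost (X : Omega -> 'cV[R]_n) (T : 'cV[R]_n -> 'cV[R]_n)
  : \bar R :=
  (\int[P]_w (sqdist (X w) (T (X w)))%:E)%E.

Definition is_OT_map (X Y : Omega -> 'cV[R]_n) (T : 'cV[R]_n -> 'cV[R]_n)
  : Prop :=
  same_law (T \o X) Y /\
  forall S : 'cV[R]_n -> 'cV[R]_n, same_law (S \o X) Y ->
    (transport_cost X T <= transport_cost X S)%E.

End gaussian_ot.

(* Solving the structural equations gives X_s = B mu_s + B eps_s, so with
   c = sigma_s' / sigma_s the vectors c (X_s - B mu_s) and X_s' - B mu_s' have the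
   same law N(0, sigma_s'^2 B D B^T): the map T_c x = B mu_s' + c (x - B mu_s)
   pushes law(X_s) to law(X_s').  It is the gradient of a convex potential, which
   makes it optimal: coordinatewise, with t = T_c(x)_i and y = S(x)_i,
     (x - y)^2 = (x - t)^2 + (t - y)^2 / c + h y - h t
   for a quadratic h, and when S pushes law(X_s) to law(X_s') the variables y and
   t have the same law, so the h-terms cancel in expectation.  Hence
     E |X_s - S X_s|^2 = E |X_s - T_c X_s|^2 + c^-1 E |T_c X_s - S X_s|^2.
   If T_W is optimal too, then (c I - W) B eps_s = 0 almost surely; a nonzero
   linear functional of eps_s is a nondegenerate Gaussian, with no atom at 0, so
   (c I - W) B = 0 and W = c I. *)

From HB Require Import structures.
From mathcomp Require Import all_boot all_order all_algebra.
From mathcomp Require Import all_classical all_reals all_analysis.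
From mathcomp Require Import normal_distribution measurable_realfun.
From mathcomp Require Import ring lra.

Set Implicit Arguments.
Unset Strict Implicit.
Unset Printing Implicit Defensive.

Import Order.TTheory GRing.Theory Num.Theory.
Local Open Scope classical_set_scope.
Local Open Scope ring_scope.

Section normal_second_moment.
Context {R : realType}.
Notation leb := (@lebesgue_measure R).

Lemma ge0_integral_normal_prob (m s : R) (f : R -> \bar R) :
  measurable_fun [set: R] f -> (forall x, 0 <= f x)%E ->
  (\int[normal_prob m s]_x f x = \int[leb]_x (f x * (normal_pdf m s x)%:E))%E.
Proof.
move=> mf f0; have dom := normal_prob_dominates m s.
rewrite -(Radon_Nikodym_SigmaFinite.change_of_variables dom) //.
have iRN := Radon_Nikodym_SigmaFinite.f_integrable dom.
apply: ae_eq_integral => //.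
- by apply: emeasurable_funM => //; exact: measurable_int iRN.
- by apply: emeasurable_funM => //; apply/measurable_EFinP; exact: measurable_normal_pdf.
apply: ae_eqe_mul2l; apply: integral_ae_eq => //.
- by apply/measurable_EFinP; exact: measurable_normal_pdf.
by move=> E _ mE; rewrite -Radon_Nikodym_SigmaFinite.f_integral.
Qed.

(* With t := x^2 / (8 s^2), x^2 exp(-x^2 / (2 s^2)) = 8 s^2 (t exp(-3t)) exp(-t)
   and t exp(-3t) <= 1. *)
Lemma sqr_normal_pdf_le (s x : R) : s != 0 ->
  x ^+ 2 * normal_pdf 0 s x <=
  normal_peak s * (s ^+ 2 *+ 8) / normal_peak (s *+ 2) * normal_pdf 0 (s *+ 2) x.
Proof.
move=> s0; have s20 : s *+ 2 != 0 by rewrite mulrn_eq0 negb_or s0.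
rewrite (normal_pdfE _ s0) (normal_pdfE _ s20) /normal_fun !subr0.
have pk2 := normal_peak_gt0 s20.
have ss : 0 < s ^+ 2 by rewrite exprn_even_gt0.
set t := x ^+ 2 / (s ^+ 2 *+ 8).
have t0 : 0 <= t by rewrite divr_ge0 ?sqr_ge0 // mulrn_wge0 // ltW.
have -> : - x ^+ 2 / (s ^+ 2 *+ 2) = - (t *+ 3) + - t by rewrite /t; field.
have -> : - x ^+ 2 / ((s *+ 2) ^+ 2 *+ 2) = - t by rewrite /t; field.
have -> : x ^+ 2 = s ^+ 2 *+ 8 * t by rewrite /t; field.
have tE : t * expR (- (t *+ 3)) <= 1.
  rewrite expRN ler_pdivrMr ?expR_gt0 // mul1r.
  by apply: le_trans (expR_ge1Dx _); lra.
have K0 : 0 <= normal_peak s * (s ^+ 2 *+ 8) * expR (- t).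
  by rewrite !mulr_ge0 ?normal_peak_ge0 ?expR_ge0 // mulrn_wge0 // ltW.
rewrite expRD.
have -> : normal_peak s * (s ^+ 2 *+ 8) / normal_peak (s *+ 2) *
    (normal_peak (s *+ 2) * expR (- t)) = normal_peak s * (s ^+ 2 *+ 8) * expR (- t).
  by field; rewrite gt_eqF.
have := ler_wpM2l K0 tE; nra.
Qed.

Lemma normal_prob_integrable_sqr (s : R) : s != 0 ->
  (normal_prob 0 s).-integrable setT (fun x => (x ^+ 2)%:E).
Proof.
move=> s0; apply/integrableP; split.
  by apply/measurable_EFinP; exact: exprn_measurable.
set K := normal_peak s * (s ^+ 2 *+ 8) / normal_peak (s *+ 2).
under eq_integral => x _ do rewrite gee0_abs ?lee_fin ?sqr_ge0 //.
rewrite ge0_integral_normal_prob //; last 2 first.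
- by apply/measurable_EFinP; exact: exprn_measurable.
- by move=> x; rewrite lee_fin sqr_ge0.
apply: (@le_lt_trans _ _ (\int[leb]_x (K%:E * (normal_pdf 0 (s *+ 2) x)%:E))%E).
  apply: ge0_le_integral => //.
  - by move=> x _; rewrite -EFinM lee_fin mulr_ge0 ?sqr_ge0 ?normal_pdf_ge0.
  - apply/measurable_EFinP; apply: measurable_funM; first exact: exprn_measurable.
    exact: measurable_normal_pdf.
  - by apply/measurable_EFinP; apply: measurable_funM => //; exact: measurable_normal_pdf.
  - by move=> x _; rewrite -!EFinM lee_fin sqr_normal_pdf_le.
rewrite integralZl //; last exact: integrable_normal_pdf.
by rewrite integral_normal_pdf mule1 ltry.
Qed.

End normal_second_moment.

Section law_transfer.
Context {d : measure_display} {Omega : measurableType d} {R : realType}.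
Variable P : probability Omega R.
Local Open Scope ereal_scope.

Definition same_dist (Y Z : Omega -> R) :=
  forall A : set R, measurable A -> P (Y @^-1` A) = P (Z @^-1` A).

(* [normal_prob] and [pushforward] are measures on [measurableTypeR R], hence the
   type of [Y]. *)
Lemma integrable_integral_law (Y : Omega -> measurableTypeR R)
    (nu : {measure set measurableTypeR R -> \bar R}) (g : R -> R) :
  measurable_fun setT Y -> (forall A, measurable A -> P (Y @^-1` A) = nu A) ->
  measurable_fun setT g -> nu.-integrable setT (fun x => (g x)%:E) ->
  P.-integrable setT (fun w => (g (Y w))%:E) /\
  \int[P]_w (g (Y w))%:E = \int[nu]_x (g x)%:E.
Proof.
move=> mY lawY mg ig.
have nuE : forall A, measurable A -> A `<=` setT -> pushforward P Y A = nu A.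
  by move=> A mA _; exact: lawY.
have mEg : measurable_fun setT (fun x => (g x)%:E) by exact/measurable_EFinP.
have igY : P.-integrable setT (fun w => (g (Y w))%:E).
  apply/integrableP; split; first by apply/measurable_EFinP; exact: measurableT_comp.
  move/integrableP : ig => [_].
  rewrite -(eq_measure_integral _ nuE) ge0_integral_pushforward //.
  exact: measurableT_comp.
split => //.
by rewrite -(eq_measure_integral _ nuE) integral_pushforward.
Qed.

Lemma same_dist_integrable_integral (Y Z : Omega -> R) (g : R -> R) :
  measurable_fun setT Y -> measurable_fun setT Z -> same_dist Y Z ->
  measurable_fun [set: R] g -> P.-integrable setT (fun w => (g (Z w))%:E) ->
  P.-integrable setT (fun w => (g (Y w))%:E) /\
  \int[P]_w (g (Y w))%:E = \int[P]_w (g (Z w))%:E.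
Proof.
move=> mY mZ YZ mg igZ.
have mEg : measurable_fun setT (fun x : R => (g x)%:E) by exact/measurable_EFinP.
pose nu := pushforward P (Z : Omega -> measurableTypeR R).
have ig : nu.-integrable setT (fun x => (g x)%:E) by exact: integrable_pushforward.
have [igY ->] := integrable_integral_law (nu := nu) mY YZ mg ig.
by split => //; rewrite integral_pushforward.
Qed.

Lemma same_dist_addl (k : R) (Y Z : Omega -> R) : same_dist Y Z ->
  same_dist (fun w => k + Y w)%R (fun w => k + Z w)%R.
Proof.
move=> YZ A mA; apply: (YZ ((fun x => k + x)%R @^-1` A)).
by rewrite -[_ @^-1` _]setTI; apply: measurable_funD => //; exact: measurable_id.
Qed.

End law_transfer.

Section square_integrable.
Context {d : measure_display} {Omega : measurableType d} {R : realType}.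
Variable P : probability Omega R.
Local Open Scope ereal_scope.

Definition sq_integrable (Y : Omega -> R) :=
  measurable_fun setT Y /\ P.-integrable setT (fun w => (Y w ^+ 2)%:E).

Lemma sq_integrable_normal (Y : Omega -> R) (s : R) : s != 0%R ->
  measurable_fun setT Y ->
  (forall A, measurable A -> P (Y @^-1` A) = normal_prob 0 s A) ->
  sq_integrable Y.
Proof.
move=> s0 mY lawY; split => //.
have mX2 : measurable_fun [set: R] (fun x : R => x ^+ 2)%R by exact: exprn_measurable.
by have [] := integrable_integral_law (nu := normal_prob 0 s) mY lawY mX2 (normal_prob_integrable_sqr s0).
Qed.

Lemma sq_integrable_same_dist (Y Z : Omega -> R) :
  measurable_fun setT Y -> same_dist P Y Z -> sq_integrable Z -> sq_integrable Y.
Proof.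
move=> mY YZ [mZ iZ]; split => //.
have mX2 : measurable_fun [set: R] (fun x : R => x ^+ 2)%R by exact: exprn_measurable.
by have [] := same_dist_integrable_integral mY mZ YZ mX2 iZ.
Qed.

Lemma sq_integrable_integrable (Y : Omega -> R) : sq_integrable Y ->
  P.-integrable setT (fun w => (Y w)%:E).
Proof.
move=> [mY iY2].
have i1 : P.-integrable setT (fun w => (1 + Y w ^+ 2)%:E).
  under eq_fun do rewrite EFinD.
  by apply: integrableD => //; exact: finite_measure_integrable_cst.
apply: le_integrable i1 => //; first exact/measurable_EFinP.
move=> w _; rewrite !abse_EFin lee_fin [X in (_ <= X)%R]ger0_norm ?addr_ge0 ?sqr_ge0 //.
rewrite -real_normK ?num_real //.
by have := normr_ge0 (Y w); have := sqr_ge0 (`|Y w| - 1)%R; nra.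
Qed.

Lemma integrable_quadratic (Y : Omega -> R) (m k0 k1 k2 : R) : sq_integrable Y ->
  P.-integrable setT (fun w => (k0 + k1 * (Y w - m) + k2 * (Y w - m) ^+ 2)%:E).
Proof.
move=> hY; have [_ iY2] := hY; have iY := sq_integrable_integrable hY.
apply: (eq_integrable _ (fun w => (k0 - k1 * m + k2 * m ^+ 2)%:E +
  ((k1 - k2 * m *+ 2)%:E * (Y w)%:E + k2%:E * (Y w ^+ 2)%:E))) => //.
  by move=> w _; rewrite -!EFinM -!EFinD; congr EFin; ring.
apply: integrableD => //; first exact: finite_measure_integrable_cst.
by apply: integrableD => //; exact: integrableZl.
Qed.

Lemma sq_integrable_affine (Y : Omega -> R) (a b m : R) : sq_integrable Y ->
  sq_integrable (fun w => a + b * (Y w - m))%R.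
Proof.
move=> hY; have [mY _] := hY; split.
  by apply: measurable_funD => //; apply: measurable_funM => //; exact: measurable_funB.
apply: eq_integrable (integrable_quadratic m (a ^+ 2) (a * b *+ 2) (b ^+ 2) hY) => //.
by move=> w _; congr EFin; ring.
Qed.

Lemma integrable_sqrB (Y Z : Omega -> R) : sq_integrable Y -> sq_integrable Z ->
  P.-integrable setT (fun w => ((Y w - Z w) ^+ 2)%:E).
Proof.
move=> [mY iY] [mZ iZ].
have iB : P.-integrable setT (fun w => (2 * Y w ^+ 2)%:E + (2 * Z w ^+ 2)%:E).
  by apply: integrableD => //; under eq_fun do rewrite EFinM; exact: integrableZl.
apply: le_integrable iB => //.
  by apply/measurable_EFinP; apply: measurable_funX; exact: measurable_funB.
move=> w _; rewrite -EFinD !abse_EFin lee_fin.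
rewrite !ger0_norm ?sqr_ge0 //; last by rewrite addr_ge0 // mulr_ge0 // sqr_ge0.
by have := sqr_ge0 (Y w + Z w)%R; nra.
Qed.

Lemma integral_sqr_affine_split (c a b : R) (x y t : Omega -> R) :
  (0 < c)%R -> sq_integrable x -> measurable_fun setT y ->
  (forall w, t w = b + c * (x w - a))%R -> same_dist P y t ->
  \int[P]_w ((x w - y w) ^+ 2)%:E =
  \int[P]_w ((x w - t w) ^+ 2)%:E + c^-1%:E * \int[P]_w ((t w - y w) ^+ 2)%:E.
Proof.
move=> c0 hx my tE yt.
have ht : sq_integrable t by rewrite (funext tE); exact: sq_integrable_affine.
have hy : sq_integrable y := sq_integrable_same_dist my yt ht.
pose h z := ((1 - c^-1) * (z - b) ^+ 2 - 2 * (a - b) * (z - b))%R.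
have splitE w : ((x w - y w) ^+ 2)%:E = ((x w - t w) ^+ 2)%:E +
    (c^-1%:E * ((t w - y w) ^+ 2)%:E + ((h (y w))%:E - (h (t w))%:E)).
  by rewrite -!EFinM -!EFinB -!EFinD /h tE; congr EFin; field; rewrite gt_eqF.
have ihy : P.-integrable setT (fun w => (h (y w))%:E).
  apply: eq_integrable (integrable_quadratic b 0 (- 2 * (a - b)) (1 - c^-1) hy) => //.
  by move=> w _; rewrite /h; congr EFin; ring.
have iht : P.-integrable setT (fun w => (h (t w))%:E).
  apply: eq_integrable (integrable_quadratic b 0 (- 2 * (a - b)) (1 - c^-1) ht) => //.
  by move=> w _; rewrite /h; congr EFin; ring.
have Eh : \int[P]_w (h (y w))%:E = \int[P]_w (h (t w))%:E.
  have mh : measurable_fun setT h.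
    by apply: measurable_funB; apply: measurable_funM => //;
      [apply: measurable_funX|]; exact: measurable_funB.
  by have [] := same_dist_integrable_integral my (proj1 ht) yt mh iht.
have ixt := integrable_sqrB hx ht; have ity := integrable_sqrB ht hy.
under eq_integral => w _ do rewrite splitE.
rewrite integralD //; last first.
  by apply: integrableD => //; [exact: integrableZl | exact: integrableB].
rewrite integralD //; last exact: integrableB; last exact: integrableZl.
rewrite integralZl // integralB // Eh subee ?adde0 //.
exact: integrable_fin_num.
Qed.

Lemma integral_sqr_eq0 (Z : Omega -> R) : measurable_fun setT Z ->
  \int[P]_w (Z w ^+ 2)%:E = 0 -> P (Z @^-1` [set 0%R]) = 1.
Proof.
move=> mZ Z20.
have mZ2 : measurable_fun setT (fun w => (Z w ^+ 2)%:E).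
  by apply/measurable_EFinP; exact: measurable_funX.
have mS0 : measurable (Z @^-1` [set 0%R]).
  by rewrite -[_ @^-1` _]setTI; exact: mZ.
have [N [mN PN0 sub]] : ae_eq P setT (fun w => (Z w ^+ 2)%:E) (cst 0).
  apply/(ae_eq_integral_abs P measurableT mZ2); rewrite -Z20.
  by apply: eq_integral => w _; rewrite gee0_abs // lee_fin sqr_ge0.
have cover : setT `<=` Z @^-1` [set 0%R] `|` N.
  move=> w _; have [|Nw] := pselect (N w); first by right.
  left; apply: contra_notP Nw => Zw0; apply: sub => /(_ I) [] /eqP.
  by rewrite sqrf_eq0 => /eqP.
apply/eqP; rewrite eq_le probability_le1 //=.
have := le_measure P (mem_set measurableT) (mem_set (measurableU _ _ mS0 mN)) cover.
rewrite /= probability_setT => /le_trans; apply.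
apply: le_trans (measureU2 P mS0 mN) _.
by move: PN0 => /= ->; rewrite adde0.
Qed.

End square_integrable.

Section linear_algebra.
Context {R : realType} {n : nat}.
Implicit Types (u v x y m : 'cV[R]_n) (M D : 'M[R]_n).

Lemma lin_delta (i : 'I_n) x : lin (delta_mx i 0) x = x i 0.
Proof.
rewrite /lin (bigD1 i) //= big1 ?addr0; first by rewrite mxE !eqxx mul1r.
by move=> j ji; rewrite mxE (negbTE ji) mul0r.
Qed.

Lemma lin0l x : lin 0 x = 0.
Proof. by rewrite /lin big1 // => i _; rewrite mxE mul0r. Qed.

Lemma lin0r u : lin u 0 = 0.
Proof. by rewrite /lin big1 // => i _; rewrite mxE mulr0. Qed.

Lemma linD u x y : lin u (x + y) = lin u x + lin u y.
Proof. by rewrite /lin -big_split; apply: eq_bigr => i _; rewrite mxE mulrDr. Qed.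

Lemma lin_mulmx u M x : lin u (M *m x) = lin (M^T *m u) x.
Proof.
rewrite /lin; under eq_bigr do rewrite mxE mulr_sumr.
rewrite exchange_big /=; apply: eq_bigr => j _.
rewrite !mxE mulr_suml; apply: eq_bigr => i _.
by rewrite mxE mulrA [u i 0 * _]mulrC.
Qed.

Lemma lin_affine u m M x : lin u (m + M *m x) = lin u m + lin (M^T *m u) x.
Proof. by rewrite linD lin_mulmx. Qed.

Lemma mulmx_coord M x (i : 'I_n) : (M *m x) i 0 = lin (col i M^T) x.
Proof. by rewrite colE -lin_mulmx lin_delta. Qed.

Definition diag_quad D u := \sum_(i < n) u i 0 ^+ 2 * D i i.

Lemma quad_scale_diag k D u : is_diag_mx D -> quad (k *: D) u = k * diag_quad D u.
Proof.
move=> /is_diag_mxP hD; rewrite /quad /diag_quad mulr_sumr; apply: eq_bigr => i _.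
rewrite (bigD1 i) //= big1 ?addr0; first by rewrite mxE expr2; ring.
by move=> j ji; rewrite mxE hD ?mulr0 ?mul0r // eq_sym.
Qed.

Lemma diag_quad_gt0 D u : (forall i, 0 < D i i) -> u != 0 -> 0 < diag_quad D u.
Proof.
move=> hD u0; have [i ui] : exists i, u i 0 != 0.
  apply/existsP; apply: contraR u0 => /existsPn u0; apply/eqP/matrixP => i j.
  by rewrite (ord1 j) mxE; apply/eqP; rewrite -[_ == _]negbK u0.
rewrite /diag_quad (bigD1 i) //=; apply: ltr_pwDl.
  by rewrite mulr_gt0 // exprn_even_gt0.
by apply: sumr_ge0 => j _; rewrite mulr_ge0 ?sqr_ge0 // ltW.
Qed.

Lemma diag_quadZ k D u : diag_quad D (k *: u) = k ^+ 2 * diag_quad D u.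
Proof.
by rewrite /diag_quad mulr_sumr; apply: eq_bigr => i _; rewrite mxE exprMn mulrA.
Qed.

End linear_algebra.

Section random_vector.
Context {d : measure_display} {Omega : measurableType d} {R : realType} {n : nat}.
Variable P : probability Omega R.

Lemma measurable_lin (E : Omega -> 'cV[R]_n) (v : 'cV[R]_n) : rvec E ->
  measurable_fun setT (fun w => lin v (E w)).
Proof.
by move=> hE; apply: measurable_sum => i; apply: measurable_funM => //; exact: hE.
Qed.

Lemma rvec_affine (E : Omega -> 'cV[R]_n) (m : 'cV[R]_n) (M : 'M[R]_n) : rvec E ->
  rvec (fun w => m + M *m E w).
Proof.
move=> hE i; under eq_fun do rewrite mxE mulmx_coord.
by apply: measurable_funD => //; exact: measurable_lin.
Qed.

Lemma same_law_coord (Y Z : Omega -> 'cV[R]_n) (i : 'I_n) : same_law P Y Z ->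
  same_dist P (fun w => Y w i 0) (fun w => Z w i 0).
Proof.
move=> [_ [_ YZ]] A mA; have := YZ (delta_mx i 0) A mA.
by under eq_fun do rewrite lin_delta; under [in RHS]eq_fun do rewrite lin_delta.
Qed.

Lemma transport_costE (X : Omega -> 'cV[R]_n) (S : 'cV[R]_n -> 'cV[R]_n) :
  rvec X -> rvec (S \o X) ->
  transport_cost P X S = (\sum_(i < n) \int[P]_w ((X w i 0 - S (X w) i 0) ^+ 2)%:E)%E.
Proof.
move=> mX mSX; rewrite /transport_cost /sqdist.
under eq_integral do rewrite -sumEFin.
rewrite ge0_integral_sum // => i.
  by apply/measurable_EFinP; apply: measurable_funX; apply: measurable_funB; [exact: mX | exact: mSX].
by move=> w _; rewrite lee_fin sqr_ge0.
Qed.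

End random_vector.

Section gaussian_vector.
Context {d : measure_display} {Omega : measurableType d} {R : realType} {n : nat}.
Variable P : probability Omega R.
Variables (D : 'M[R]_n) (eps : Omega -> 'cV[R]_n) (sg : R).
Hypotheses (hD : is_diag_mx D) (hDpos : forall i, 0 < D i i) (hsg : 0 < sg)
  (heps : gaussian_vec P eps 0 (sg ^+ 2 *: D)).

Lemma gaussian_lin_sd_neq0 (v : 'cV[R]_n) : v != 0 ->
  Num.sqrt (sg ^+ 2 * diag_quad D v) != 0.
Proof.
by move=> v0; rewrite gt_eqF // sqrtr_gt0 mulr_gt0 ?exprn_gt0 ?diag_quad_gt0.
Qed.

Lemma gaussian_lin_law (v : 'cV[R]_n) : v != 0 ->
  forall A, measurable A -> P ((fun w => lin v (eps w)) @^-1` A) =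
    normal_prob 0 (Num.sqrt (sg ^+ 2 * diag_quad D v)) A.
Proof.
move=> v0 A mA; move: heps; rewrite /gaussian_vec => -[_ /(_ v) [lawv _]].
by rewrite lawv ?quad_scale_diag ?lin0r // mulr_gt0 ?exprn_gt0 ?diag_quad_gt0.
Qed.

Lemma gaussian_lin_sq_integrable (v : 'cV[R]_n) :
  sq_integrable P (fun w => lin v (eps w)).
Proof.
have mv u : measurable_fun setT (fun w => lin u (eps w)).
  exact: measurable_lin (proj1 heps).
have [->|v0] := eqVneq v 0; last first.
  exact: sq_integrable_normal (gaussian_lin_sd_neq0 v0) (mv v) (gaussian_lin_law v0).
split => //; apply: (eq_integrable measurableT (EFin \o cst 0%R)); last first.
  exact: finite_measure_integrable_cst.
by move=> w _; rewrite /= lin0l expr0n.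
Qed.

Lemma gaussian_lin_atom0 (v : 'cV[R]_n) : v != 0 ->
  P ((fun w => lin v (eps w)) @^-1` [set 0]) = 0%E.
Proof.
move=> v0; rewrite (gaussian_lin_law v0 (measurable_set1 _)).
have := (null_content_dominatesP _ _).1 (normal_prob_dominates 0 (Num.sqrt (sg ^+ 2 * diag_quad D v))).
by apply; [exact: measurable_set1 | exact: lebesgue_measure_set1].
Qed.

Lemma gaussian_mulmx_eq0 (M : 'M[R]_n) :
  (forall i, \int[P]_w (((M *m eps w) i 0) ^+ 2)%:E = 0)%E -> M = 0.
Proof.
move=> M0; apply/matrixP => i j.
have colM0 : col i M^T = 0.
  apply/eqP/negP => /negP v0.
  have int0 : (\int[P]_w ((lin (col i M^T) (eps w)) ^+ 2)%:E = 0)%E.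
    by rewrite -(M0 i); apply: eq_integral => w _; rewrite mulmx_coord.
  have := integral_sqr_eq0 (measurable_lin (col i M^T) (proj1 heps)) int0.
  by rewrite gaussian_lin_atom0 // => -[] /eqP; rewrite eq_sym oner_eq0.
by have := congr1 (fun x : 'cV_n => x j 0) colM0; rewrite !mxE.
Qed.

End gaussian_vector.

Section gaussian_optimal_transport.
Context {d : measure_display} {Omega : measurableType d} {R : realType} {n : nat}.
Variable P : probability Omega R.
Variables (D B : 'M[R]_n) (m1 m2 : 'cV[R]_n) (s1 s2 : R).
Variables (eps1 eps2 X1 X2 : Omega -> 'cV[R]_n).
Hypotheses (hD : is_diag_mx D) (hDpos : forall i, 0 < D i i).
Hypotheses (hs1 : 0 < s1) (hs2 : 0 < s2).
Hypotheses (heps1 : gaussian_vec P eps1 0 (s1 ^+ 2 *: D))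
  (heps2 : gaussian_vec P eps2 0 (s2 ^+ 2 *: D)).
Hypotheses (hB : B \in unitmx) (hX1 : forall w, X1 w = m1 + B *m eps1 w)
  (hX2 : forall w, X2 w = m2 + B *m eps2 w).

Let c := s2 / s1.
Let affine_map W x := m2 + W *m (x - m1).

Let c_gt0 : 0 < c. Proof. exact: divr_gt0. Qed.

Lemma same_dist_gaussian_lin (v : 'cV[R]_n) :
  same_dist P (fun w => lin (c *: v) (eps1 w)) (fun w => lin v (eps2 w)).
Proof.
move=> A mA; have [->|v0] := eqVneq v 0.
  by rewrite scaler0; congr (P _); apply/funext => w /=; rewrite !lin0l.
have cv0 : c *: v != 0 by rewrite scaler_eq0 negb_or gt_eqF.
rewrite (gaussian_lin_law hD hDpos hs1 heps1 cv0 mA).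
rewrite (gaussian_lin_law hD hDpos hs2 heps2 v0 mA) diag_quadZ.
by congr (normal_prob _ (Num.sqrt _) _); rewrite /c; field; rewrite gt_eqF.
Qed.

Let affine_map_X1 W w : affine_map W (X1 w) = m2 + (W *m B) *m eps1 w.
Proof. by rewrite /affine_map hX1 addrAC subrr add0r mulmxA. Qed.

Let affine_map_c_coord w (i : 'I_n) :
  affine_map c%:M (X1 w) i 0 = m2 i 0 + c * (X1 w i 0 - m1 i 0).
Proof. by rewrite /affine_map mul_scalar_mx !mxE. Qed.

Let affine_map_coordB W w (i : 'I_n) :
  affine_map c%:M (X1 w) i 0 - affine_map W (X1 w) i 0 = ((c%:M - W) *m B *m eps1 w) i 0.
Proof.
have -> : affine_map c%:M (X1 w) i 0 - affine_map W (X1 w) i 0 =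
    (affine_map c%:M (X1 w) - affine_map W (X1 w)) i 0 by rewrite !mxE.
by rewrite !affine_map_X1 opprD addrACA subrr add0r -!mulmxBl.
Qed.

Let rvec_X1 : rvec X1.
Proof. by rewrite (funext hX1); exact: rvec_affine (proj1 heps1). Qed.

Let rvec_X2 : rvec X2.
Proof. by rewrite (funext hX2); exact: rvec_affine (proj1 heps2). Qed.

Let sq_integrable_X1 (i : 'I_n) : sq_integrable P (fun w => X1 w i 0).
Proof.
have -> : (fun w => X1 w i 0) =
    (fun w => m1 i 0 + 1 * (lin (col i B^T) (eps1 w) - 0)).
  by apply/funext => w; rewrite hX1 mxE mulmx_coord mul1r subr0.
exact/sq_integrable_affine/(gaussian_lin_sq_integrable hD hDpos hs1 heps1).
Qed.

Lemma same_law_affine_map_c : same_law P (affine_map c%:M \o X1) X2.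
Proof.
split; first by rewrite /comp (funext (affine_map_X1 _)); exact: rvec_affine (proj1 heps1).
split => // u A mA.
have -> : (fun w => lin u ((affine_map c%:M \o X1) w)) =
    (fun w => lin u m2 + lin (c *: (B^T *m u)) (eps1 w)).
  apply/funext => w; rewrite /= affine_map_X1 lin_affine trmx_mul tr_scalar_mx.
  by rewrite mul_mx_scalar scalemxAl.
have -> : (fun w => lin u (X2 w)) = (fun w => lin u m2 + lin (B^T *m u) (eps2 w)).
  by apply/funext => w; rewrite hX2 lin_affine.
apply: (same_dist_addl (lin u m2) _ mA).
exact: same_dist_gaussian_lin.
Qed.

Lemma transport_cost_split (S : 'cV[R]_n -> 'cV[R]_n) : same_law P (S \o X1) X2 ->
  transport_cost P X1 S = (transport_cost P X1 (affine_map c%:M) + c^-1%:E *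
    \sum_(i < n) \int[P]_w ((affine_map c%:M (X1 w) i 0 - S (X1 w) i 0) ^+ 2)%:E)%E.
Proof.
move=> hS; have [rvS _] := hS; have [rvT _] := same_law_affine_map_c.
rewrite !transport_costE // ge0_sume_distrr; last first.
  by move=> i _; apply: integral_ge0 => w _; rewrite lee_fin sqr_ge0.
rewrite -big_split; apply: eq_bigr => i _ /=.
apply: integral_sqr_affine_split (affine_map_c_coord ^~ i) _ => // A mA.
by rewrite (same_law_coord i hS mA) (same_law_coord i same_law_affine_map_c mA).
Qed.

Let transport_cost_affine_map_c_fin : transport_cost P X1 (affine_map c%:M) \is a fin_num.
Proof.
have [rvT _] := same_law_affine_map_c.
rewrite transport_costE //; apply/sum_fin_numP => i _ _.
apply: integrable_fin_num => //; apply: (integrable_sqrB (sq_integrable_X1 i)).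
rewrite (funext (affine_map_c_coord ^~ i)); exact: sq_integrable_affine.
Qed.

Lemma is_OT_map_affine_map_c : is_OT_map P X1 X2 (affine_map c%:M).
Proof.
split=> [|S hS]; first exact: same_law_affine_map_c.
rewrite (transport_cost_split hS) leeDl // mule_ge0 //.
  by rewrite lee_fin invr_ge0 ltW.
by apply: sume_ge0 => i _; apply: integral_ge0 => w _; rewrite lee_fin sqr_ge0.
Qed.

Lemma is_OT_map_affine_map_eq (W : 'M[R]_n) :
  is_OT_map P X1 X2 (affine_map W) -> W = c%:M.
Proof.
move=> [hW /(_ _ same_law_affine_map_c)].
rewrite (transport_cost_split hW) -[leRHS]adde0 leeD2lE //.
rewrite pmule_rle0 ?lte_fin ?invr_gt0 // => sum_le0.
have diff0 i : (\int[P]_w ((((c%:M - W) *m B) *m eps1 w) i 0 ^+ 2)%:E = 0)%E.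
  apply/eqP; rewrite eq_le integral_ge0 ?andbT; last first.
    by move=> w _; rewrite lee_fin sqr_ge0.
  under eq_integral do rewrite -affine_map_coordB.
  apply: le_trans sum_le0; rewrite (bigD1 i) //=; apply: leeDl.
  by apply: sume_ge0 => j _; apply: integral_ge0 => w _; rewrite lee_fin sqr_ge0.
have /(congr1 (mulmx^~ (invmx B))) := gaussian_mulmx_eq0 hD hDpos hs1 heps1 diff0.
by rewrite mulmxK // mul0mx => /eqP; rewrite subr_eq0 => /eqP.
Qed.

End gaussian_optimal_transport.

Lemma sem_reduced_form (R : comUnitRingType) (n : nat) (A : 'M[R]_n) (m e x : 'cV[R]_n) :
  (1%:M - A) \in unitmx -> x = m + A *m x + e ->
  x = invmx (1%:M - A) *m m + invmx (1%:M - A) *m e.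
Proof.
move=> hU hx; rewrite -mulmxDr -{1}[x](mulKmx hU); congr (_ *m _).
by rewrite mulmxBl mul1mx {1}hx addrAC addrK.
Qed.

Theorem mainTheorem7 (R : realType) (n : nat) (A D : 'M[R]_n)
  (mu : bool -> 'cV[R]_n) (sigma : bool -> R)
  (d : measure_display) (Omega : measurableType d) (P : probability Omega R)
  (eps X : bool -> Omega -> 'cV[R]_n) :
  (1%:M - A) \in unitmx ->
  (forall s, 0 < sigma s) ->
  is_diag_mx D -> (forall i, 0 < D i i) ->
  (forall s, gaussian_vec P (eps s) 0 (sigma s ^+ 2 *: D)) ->
  (forall s w, X s w = mu s + A *m X s w + eps s w) ->
  let B := invmx (1%:M - A) in
  forall s : bool,
    let s' := ~~ s in
    let c := sigma s' / sigma s in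
    let xCF := fun x : 'cV[R]_n => B *m mu s' + c *: (x - B *m mu s) in
    let T := fun (W : 'M[R]_n) (x : 'cV[R]_n) => B *m mu s' + W *m (x - B *m mu s) in
    (forall W : 'M[R]_n, is_OT_map P (X s) (X s') (T W) <-> W = c%:M) /\
    (forall x : 'cV[R]_n, T (c%:M) x = xCF x).
Proof.
move=> hU hsigma hD hDpos heps hX B s s' c xCF T.
have hB : B \in unitmx by rewrite unitmx_inv.
have hXB r w : X r w = B *m mu r + B *m eps r w := sem_reduced_form hU (hX r w).
split=> [W|x]; last by rewrite /T /xCF mul_scalar_mx.
split=> [|->].
  exact: is_OT_map_affine_map_eq hD hDpos (hsigma s) (hsigma s') (heps s) (heps s')
    hB (hXB s) (hXB s') W.
exact: is_OT_map_affine_map_c hD hDpos (hsigma s) (hsigma s') (heps s) (heps s')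
  (hXB s) (hXB s').
Qed.
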